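(* Let $k\ge1$, $GP=GP(3k,k)$, and let $\gamma:E(GP)\to\{1,2,3\}$ be a proper edge colouring. Let $(a,b,c)$ be a permutation of $(1,2,3)$ such that $\gamma_1$ is a vertex of $T_\pm$ or of $H_\pm$. Then $$\operatorname{sign}(\gamma)=\prod_{i=1}^k \operatorname{sign}(\gamma_i,\gamma_{i+1}).$$
   Context: $GP(3k,k)$ has vertex set $\{u_i,v_i : i\in\mathbb{Z}_{3k}\}$ and edges $u_iu_{i+1}$, $u_iv_i$, $v_iv_{i+k}$ for $i\in\mathbb{Z}_{3k}$ (indices modulo $3k$). For $i=1,\dots,k+1$ let $\gamma_i=(\gamma(u_iu_{i+1}),\gamma(u_{k+i}u_{k+i+1}),\gamma(u_{2k+i}u_{2k+i+1}))$, written as a string $xyz$. Vertex signs: $\operatorname{sign}_\gamma(u_i)=+$ if $(\gamma(u_{i-1}u_i),\gamma(u_iu_{i+1}),\gamma(u_iv_i))\in\{123,231,312\}$ and $-$ otherwise; $\operatorname{sign}_\gamma(v_i)=+$ if $(\gamma(v_{k+i}v_i),\gamma(v_iv_{2k+i}),\gamma(v_iu_i))\in\{123,231,312\}$ and $-$ otherwise. Then $\operatorname{sign}(\gamma)=\prod_{w\in V(GP)}\operatorname{sign}_\gamma(w)$ (with $+,-$ multiplied as $\pm1$). Given the permutation $(a,b,c)$: $T_\pm$ is the directed graph on vertices $abc,bca,cab$ having both arcs between each pair, with signs $\operatorname{sign}(abc,cab)=\operatorname{sign}(cab,bca)=\operatorname{sign}(bca,abc)=+$ and the three reverse arcs negative.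 $H_\pm$ is the directed graph on the $6$-cycle $aba-bcc-aab-cbc-baa-ccb-aba$ with both arcs for each edge, where the arcs $aba\to bcc$, $bcc\to aab$, $aab\to cbc$, $cbc\to baa$, $baa\to ccb$, $ccb\to aba$ have sign $+$ and their reverses have sign $-$. $\operatorname{sign}(x,y)$ denotes the sign of the arc from $x$ to $y$. *)

From mathcomp Require Import all_boot all_order all_algebra.
Set Implicit Arguments. Unset Strict Implicit. Unset Printing Implicit Defensive.
Import GRing.Theory Num.Theory.

(* Vertex indices of GP(3k,k) live in Z_{3k}; we use the ordinal type
   'I_((3*k).-1.+1), which is 'I_(3*k) whenever k >= 1. *)
Definition GPN (k : nat) := (3 * k).-1.+1.

(* vertices: (false, i) = u_i, (true, i) = v_i *)
Definition GPV (k : nat) : finType := (bool * 'I_(GPN k))%type.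

Definition gp_u (k i : nat) : GPV k := (false, inord (i %% (3 * k))).
Definition gp_v (k i : nat) : GPV k := (true, inord (i %% (3 * k))).

Definition GPE (k : nat) : {set {set GPV k}} :=
  [set [set gp_u k i; gp_u k i.+1] | i : 'I_(GPN k)] :|:
  [set [set gp_u k i; gp_v k i] | i : 'I_(GPN k)] :|:
  [set [set gp_v k i; gp_v k (i + k)] | i : 'I_(GPN k)].

Definition proper_3_edge_colouring (k : nat) (g : {set GPV k} -> nat) : Prop :=
  (forall e, e \in GPE k -> 1 <= g e <= 3) /\
  (forall e f, e \in GPE k -> f \in GPE k -> e != f ->
     e :&: f != set0 -> g e != g f).

Definition cyc123 (x y z : nat) : bool :=
  (x, y, z) \in [:: (1, 2, 3); (2, 3, 1); (3, 1, 2)].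

Definition pmsign (b : bool) : int := if b then 1%R else (-1)%R.

Definition vsign (k : nat) (g : {set GPV k} -> nat) (w : GPV k) : int :=
  let i := nat_of_ord w.2 in
  if ~~ w.1 then
    pmsign (cyc123 (g [set gp_u k (i + 3 * k).-1; gp_u k i])
                   (g [set gp_u k i; gp_u k i.+1])
                   (g [set gp_u k i; gp_v k i]))
  else
    pmsign (cyc123 (g [set gp_v k (k + i); gp_v k i])
                   (g [set gp_v k i; gp_v k (2 * k + i)])
                   (g [set gp_v k i; gp_u k i])).

Definition gsign (k : nat) (g : {set GPV k} -> nat) : int :=
  (\prod_(w : GPV k) vsign g w)%R.

Definition gam (k : nat) (g : {set GPV k} -> nat) (i : nat) : nat * nat * nat :=
  (g [set gp_u k i; gp_u k i.+1],
   g [set gp_u k (k + i); gp_u k (k + i).+1],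
   g [set gp_u k (2 * k + i); gp_u k (2 * k + i).+1]).

Definition T_vertices (a b c : nat) : seq (nat * nat * nat) :=
  [:: (a, b, c); (b, c, a); (c, a, b)].
Definition H_vertices (a b c : nat) : seq (nat * nat * nat) :=
  [:: (a, b, a); (b, c, c); (a, a, b); (c, b, c); (b, a, a); (c, c, b)].

(* Positive arcs of T_pm and H_pm; the reverse arcs are the negative ones. *)
Definition pos_arcs (a b c : nat) : seq ((nat * nat * nat) * (nat * nat * nat)) :=
  [:: ((a, b, c), (c, a, b)); ((c, a, b), (b, c, a)); ((b, c, a), (a, b, c));
      ((a, b, a), (b, c, c)); ((b, c, c), (a, a, b)); ((a, a, b), (c, b, c));
      ((c, b, c), (b, a, a)); ((b, a, a), (c, c, b)); ((c, c, b), (a, b, a))].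

(* sign(x,y) of the arc x -> y in T_pm or H_pm.  For pairs that are not
   arcs the value is irrelevant; we default to +1. *)
Definition arc_sign (a b c : nat) (x y : nat * nat * nat) : int :=
  if (x, y) \in pos_arcs a b c then 1%R
  else if (y, x) \in pos_arcs a b c then (-1)%R
  else 1%R.

From mathcomp Require Import all_boot all_order all_algebra zify.
Import GRing.Theory.
Set Implicit Arguments. Unset Strict Implicit. Unset Printing Implicit Defensive.

(* sign(gamma) is the product, over the 3k spokes u_n v_n, of sign(u_n) sign(v_n).
   Group the spokes into the k triples {n, n + k, n + 2k} with 2 <= n <= k + 1.
   Around such a triple every colour is forced by the incoming rim colours
   gamma_(n-1) and the colours of the inner triangle v_n v_(n+k) v_(n+2k); checking
   the finitely many cases shows that gamma_n is again a vertex of T or H and that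
   the triple contributes exactly sign(gamma_(n-1), gamma_n). *)

Section BigNat.
Variables (R : Type) (idx : R) (op : Monoid.com_law idx).

Lemma big_nat_period (F : nat -> R) m l :
  (forall i, F (i + l) = F i) ->
  \big[op/idx]_(m <= i < m + l) F i = \big[op/idx]_(0 <= i < l) F i.
Proof.
move=> F_per; elim: m => [//|m IHm].
case: l F_per IHm => [|l] F_per IHm; first by rewrite addn0 !big_geq.
rewrite -IHm addSn big_nat_recr /=; last lia.
rewrite F_per [RHS]big_ltn; last lia.
exact: Monoid.mulmC.
Qed.

Lemma big_nat_blocks (F : nat -> R) m p l :
  \big[op/idx]_(m <= i < m + p * l) F i =
  \big[op/idx]_(m <= i < m + l) \big[op/idx]_(j < p) F (j * l + i).
Proof.
elim: p m => [|p IHp] m.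
  by rewrite mul0n addn0 big_geq // big1 // => i _; rewrite big_ord0.
rewrite mulSn addnA [LHS](big_cat_nat (n := m + l)) ?leq_addr //= IHp.
rewrite big_addn addnK -big_split /=; apply: eq_bigr => i _.
rewrite big_ord_recl mul0n add0n; congr (op _ _); apply: eq_bigr => j _.
by rewrite lift0 mulSn; congr F; lia.
Qed.

End BigNat.

Definition colours : seq nat := [:: 1; 2; 3]%N.

Definition tricolour (p q r : nat) : bool :=
  [&& p \in colours, q \in colours, r \in colours & uniq [:: p; q; r]].

Definition third (p q : nat) : nat := 6 - (p + q).

Lemma tricolour_third p q r : tricolour p q r -> r = third p q.
Proof.
case/and4P; rewrite !inE.
by move=> /or3P[]/eqP-> /or3P[]/eqP-> /or3P[]/eqP->.
Qed.

Lemma tricolour_mid p q r : tricolour p q r -> q = third p r.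
Proof.
case/and4P; rewrite !inE.
by move=> /or3P[]/eqP-> /or3P[]/eqP-> /or3P[]/eqP->.
Qed.

Definition TH_vertices (a b c : nat) := T_vertices a b c ++ H_vertices a b c.

(* sign(u) sign(v) for a spoke uv: x and y are the rim colours entering and leaving u,
   s the colour of the spoke, t and t' the inner colours at v towards v_(n+k) and
   v_(n-k). *)
Definition spoke_sign (x y s t t' : nat) : int :=
  (pmsign (cyc123 x y s) * pmsign (cyc123 t t' s))%R.

(* The spoke colours are the third colours of the inner triangle and the outgoing rim
   colours the third colours at the u's, so the table below is exhaustive. *)
Lemma spoke_triple_table :
  all (fun abc => if abc is [:: a; b; c] then
    all (fun x => let '(x0, x1, x2) := x in
    all (fun t0 => all (fun t1 => all (fun t2 =>
      let s0 := third t0 t2 in let s1 := third t1 t0 in let s2 := third t2 t1 in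
      let y := (third x0 s0, third x1 s1, third x2 s2) in
      [&& tricolour t0 t2 s0, tricolour t1 t0 s1, tricolour t2 t1 s2,
          x0 != s0, x1 != s1 & x2 != s2] ==>
      (y \in TH_vertices a b c) &&
      ((spoke_sign x0 y.1.1 s0 t0 t2 * spoke_sign x1 y.1.2 s1 t1 t0 *
        spoke_sign x2 y.2 s2 t2 t1)%R == arc_sign a b c x y))
    colours) colours) colours) (TH_vertices a b c)
  else true) (permutations colours).
Proof. by vm_compute. Qed.

Lemma spoke_triple_sign a b c x0 x1 x2 y0 y1 y2 s0 s1 s2 t0 t1 t2 :
  perm_eq [:: a; b; c] colours -> (x0, x1, x2) \in TH_vertices a b c ->
  tricolour t0 t2 s0 -> tricolour t1 t0 s1 -> tricolour t2 t1 s2 ->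
  tricolour x0 y0 s0 -> tricolour x1 y1 s1 -> tricolour x2 y2 s2 ->
  (y0, y1, y2) \in TH_vertices a b c /\
  (spoke_sign x0 y0 s0 t0 t2 * spoke_sign x1 y1 s1 t1 t0 * spoke_sign x2 y2 s2 t2 t1
   = arc_sign a b c (x0, x1, x2) (y0, y1, y2))%R.
Proof.
rewrite -mem_permutations => habc hx ht0 ht1 ht2 hy0 hy1 hy2.
move: spoke_triple_table => /allP/(_ _ habc)/allP/(_ _ hx).
have /and4P[t0c t2c _ _] := ht0; have /and4P[t1c _ _ _] := ht1.
move=> /allP/(_ _ t0c)/allP/(_ _ t1c)/allP/(_ _ t2c).
cbv zeta.
rewrite -(tricolour_third ht0) -(tricolour_third ht1) -(tricolour_third ht2).
rewrite -(tricolour_mid hy0) -(tricolour_mid hy1) -(tricolour_mid hy2) ht0 ht1 ht2.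
have outer_neq p q r : tricolour p q r -> p != r.
  by case/and4P=> _ _ _; rewrite /= !inE negb_or => /andP[/andP[_ ->]].
rewrite (outer_neq _ _ _ hy0) (outer_neq _ _ _ hy1) (outer_neq _ _ _ hy2).
by case/andP=> -> /eqP.
Qed.

Lemma gp_u_mod k m n : m = n %[mod 3 * k] -> gp_u k m = gp_u k n.
Proof. by rewrite /gp_u => ->. Qed.

Lemma gp_v_mod k m n : m = n %[mod 3 * k] -> gp_v k m = gp_v k n.
Proof. by rewrite /gp_v => ->. Qed.

Lemma gp_u_neq_v k m n : gp_u k m != gp_v k n.
Proof. by []. Qed.

Lemma gp_u_period k m n : m = (n + 3 * k)%N -> gp_u k m = gp_u k n.
Proof. by move=> ->; apply: gp_u_mod; rewrite modnDr. Qed.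

Lemma gp_v_period k m n : m = (n + 3 * k)%N -> gp_v k m = gp_v k n.
Proof. by move=> ->; apply: gp_v_mod; rewrite modnDr. Qed.

Section GeneralisedPetersen.

Variable k : nat.
Hypothesis k_gt0 : (0 < k)%N.

Lemma val_inord_mod n : (inord (n %% (3 * k)) : 'I_(GPN k)) = n %% (3 * k) :> nat.
Proof. by rewrite inordK // prednK ?ltn_pmod ?muln_gt0. Qed.

Lemma inord_mod_neq n d : (0 < d < 3 * k)%N ->
  (inord ((n + d) %% (3 * k)) : 'I_(GPN k)) != inord (n %% (3 * k)).
Proof.
case/andP=> d_gt0 d_lt; rewrite -val_eqE /= !val_inord_mod.
by rewrite -{2}[n]addn0 eqn_modDl mod0n -/(dvdn _ d) gtnNdvd.
Qed.

Lemma gp_u_neq m n d : m = (n + d)%N -> (0 < d < 3 * k)%N -> gp_u k m != gp_u k n.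
Proof. by move=> -> hd; rewrite /gp_u xpair_eqE eqxx inord_mod_neq. Qed.

Lemma gp_v_neq m n d : m = (n + d)%N -> (0 < d < 3 * k)%N -> gp_v k m != gp_v k n.
Proof. by move=> -> hd; rewrite /gp_v xpair_eqE eqxx inord_mod_neq. Qed.

Lemma inord_modn_mod n : (inord (n %% (3 * k)) : 'I_(GPN k)) = n %[mod 3 * k].
Proof. by rewrite val_inord_mod modn_mod. Qed.

Lemma rim_edge n : [set gp_u k n; gp_u k n.+1] \in GPE k.
Proof.
rewrite /GPE !inE -orbA; apply/orP; left.
apply/imsetP; exists (inord (n %% (3 * k))) => //.
congr [set _; _]; apply: gp_u_mod; first by rewrite inord_modn_mod.
by rewrite -[in RHS]addn1 -[in LHS]addn1 -[RHS]modnDml inord_modn_mod modnDml.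
Qed.

Lemma spoke_edge n : [set gp_u k n; gp_v k n] \in GPE k.
Proof.
rewrite /GPE !inE; apply/orP; left; apply/orP; right.
apply/imsetP; exists (inord (n %% (3 * k))) => //.
by congr [set _; _]; [apply: gp_u_mod | apply: gp_v_mod]; rewrite inord_modn_mod.
Qed.

Lemma inner_edge n : [set gp_v k n; gp_v k (n + k)] \in GPE k.
Proof.
rewrite /GPE !inE; apply/orP; right.
apply/imsetP; exists (inord (n %% (3 * k))) => //.
congr [set _; _]; apply: gp_v_mod; first by rewrite inord_modn_mod.
by rewrite -[RHS]modnDml inord_modn_mod modnDml.
Qed.

Variable g : {set GPV k} -> nat.
Hypothesis g_proper : proper_3_edge_colouring g.

Definition rim_colour n := g [set gp_u k n; gp_u k n.+1].
Definition spoke_colour n := g [set gp_u k n; gp_v k n].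
Definition inner_colour n := g [set gp_v k n; gp_v k (n + k)].

Lemma tricolour_at p q1 q2 q3 : uniq [:: p; q1; q2; q3] ->
  [set p; q1] \in GPE k -> [set p; q2] \in GPE k -> [set p; q3] \in GPE k ->
  tricolour (g [set p; q1]) (g [set p; q2]) (g [set p; q3]).
Proof.
move=> uniq_pq e1 e2 e3.
have colour_in e : e \in GPE k -> g e \in colours.
  by move/g_proper.1; rewrite !inE; case: (g e) => [|[|[|[|]]]].
have colour_neq q q' : q != p -> q != q' ->
    [set p; q] \in GPE k -> [set p; q'] \in GPE k -> g [set p; q] != g [set p; q'].
  move=> qp qq' e e'; apply: g_proper.2 => //.
    apply/eqP => eq_pq; have : q \in [set p; q'] by rewrite -eq_pq set22.
    by rewrite !inE (negbTE qp) (negbTE qq').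
  by apply/set0Pn; exists p; rewrite !inE eqxx.
move: uniq_pq; rewrite /= !inE !negb_or -!andbA ![p == _]eq_sym.
case/and3P=> pq1 pq2 /and4P[pq3 q12 q13 /andP[q23 _]].
by rewrite /tricolour /= !colour_in // !inE !negb_or !colour_neq.
Qed.

Lemma tricolour_u n :
  tricolour (rim_colour n) (rim_colour n.+1) (spoke_colour n.+1).
Proof.
rewrite /rim_colour /spoke_colour setUC.
apply: tricolour_at; [|by rewrite setUC rim_edge | exact: rim_edge | exact: spoke_edge].
rewrite /= !inE !negb_or !gp_u_neq_v.
rewrite [gp_u k n.+1 == gp_u k n.+2]eq_sym [gp_u k n == gp_u k n.+2]eq_sym.
by rewrite (@gp_u_neq n.+1 n 1) ?(@gp_u_neq n.+2 n.+1 1) ?(@gp_u_neq n.+2 n 2); lia.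
Qed.

Lemma inner_colour_period m n : m = (n + 3 * k)%N -> inner_colour m = inner_colour n.
Proof.
move=> ->; rewrite /inner_colour (@gp_v_period _ (n + 3 * k) n) //.
by rewrite (@gp_v_period _ (n + 3 * k + k) (n + k)) //; lia.
Qed.

Lemma tricolour_v n :
  tricolour (inner_colour n) (inner_colour (2 * k + n)) (spoke_colour n).
Proof.
have wrap : gp_v k (2 * k + n + k) = gp_v k n by apply: gp_v_period; lia.
rewrite /inner_colour /spoke_colour wrap ![[set _; gp_v k n]]setUC.
apply: tricolour_at; [|exact: inner_edge | by rewrite setUC -wrap inner_edge |
  by rewrite setUC spoke_edge].
rewrite /= !inE !negb_or ![_ == gp_u k n]eq_sym !gp_u_neq_v.
rewrite [gp_v k n == gp_v k (n + k)]eq_sym [gp_v k n == gp_v k (2 * k + n)]eq_sym.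
rewrite [gp_v k (n + k) == gp_v k (2 * k + n)]eq_sym.
by rewrite (@gp_v_neq (n + k) n k) ?(@gp_v_neq (2 * k + n) n (2 * k))
  ?(@gp_v_neq (2 * k + n) (n + k) k); lia.
Qed.

Lemma vsign_u n : vsign g (gp_u k n.+1) =
  pmsign (cyc123 (rim_colour n) (rim_colour n.+1) (spoke_colour n.+1)).
Proof.
rewrite /vsign /= val_inord_mod; set r := n.+1 %% (3 * k).
have r_mod : r = n.+1 %[mod 3 * k] by rewrite modn_mod.
have -> : gp_u k (r + 3 * k).-1 = gp_u k n.
  apply/gp_u_mod/eqP; rewrite -(eqn_modDr 1) !addn1 prednK; last lia.
  by rewrite modnDr r_mod.
have -> : gp_u k r.+1 = gp_u k n.+2.
  by apply: gp_u_mod; rewrite -[r.+1]addn1 -modnDml r_mod modnDml addn1.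
by rewrite (gp_u_mod r_mod) (gp_v_mod r_mod).
Qed.

Lemma vsign_v n : vsign g (gp_v k n) =
  pmsign (cyc123 (inner_colour n) (inner_colour (2 * k + n)) (spoke_colour n)).
Proof.
rewrite /vsign /= val_inord_mod; set r := n %% (3 * k).
have r_mod : r = n %[mod 3 * k] by rewrite modn_mod.
have shift d : (d + r = d + n %[mod 3 * k])%N by rewrite -modnDmr r_mod modnDmr.
rewrite (gp_v_mod (shift k)) (gp_v_mod (shift (2 * k))) (gp_u_mod r_mod) (gp_v_mod r_mod).
rewrite /inner_colour /spoke_colour (@gp_v_period _ (2 * k + n + k) n); last lia.
by rewrite addnC ![[set _; gp_v k n]]setUC.
Qed.

Definition spoke_vsign n : int := (vsign g (gp_u k n) * vsign g (gp_v k n))%R.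

Lemma spoke_vsign_period n : spoke_vsign (n + 3 * k) = spoke_vsign n.
Proof. by rewrite /spoke_vsign (@gp_u_period _ _ n) ?(@gp_v_period _ _ n). Qed.

Lemma gsign_spokes : gsign g = (\prod_(0 <= n < 3 * k) spoke_vsign n)%R.
Proof.
have -> : gsign g = (\prod_(b : bool) \prod_(i : 'I_(GPN k)) vsign g (b, i))%R.
  by rewrite /gsign pair_big; apply: eq_bigr => -[].
rewrite big_bool /= -big_split /=.
have -> : (3 * k = GPN k)%N by rewrite /GPN prednK // muln_gt0.
rewrite big_mkord; apply: eq_bigr => i _; rewrite mulrC /spoke_vsign /gp_u /gp_v.
by rewrite modn_small ?inord_val // -[X in (_ < X)%N]prednK ?muln_gt0.
Qed.

Lemma spoke_triple_vsign a b c i :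
  perm_eq [:: a; b; c] colours -> gam g i \in TH_vertices a b c ->
  gam g i.+1 \in TH_vertices a b c /\
  (spoke_vsign i.+1 * spoke_vsign (k + i.+1) * spoke_vsign (2 * k + i.+1)
   = arc_sign a b c (gam g i) (gam g i.+1))%R.
Proof.
move=> habc hx; rewrite /gam /spoke_vsign (addnS k i) (addnS (2 * k) i) !vsign_u.
rewrite !vsign_v (addnS (2 * k) i).
have wrap1 : inner_colour (2 * k + (k + i).+1) = inner_colour i.+1.
  by apply: inner_colour_period; lia.
have wrap2 : inner_colour (2 * k + (2 * k + i).+1) = inner_colour (k + i).+1.
  by apply: inner_colour_period; lia.
have := tricolour_v (k + i).+1; have := tricolour_v (2 * k + i).+1.
have := tricolour_v i.+1; rewrite wrap1 wrap2 addnS => ht0 ht2 ht1.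
exact: spoke_triple_sign habc hx ht0 ht1 ht2
  (tricolour_u i) (tricolour_u (k + i)) (tricolour_u (2 * k + i)).
Qed.

End GeneralisedPetersen.

Unset Implicit Arguments.
Local Open Scope ring_scope.

Theorem lemma10 (k : nat) (hk : (1 <= k)%N) (g : {set GPV k} -> nat)
    (hg : proper_3_edge_colouring g) (a b c : nat)
    (habc : perm_eq [:: a; b; c] [:: 1; 2; 3]%N)
    (h1 : (gam g 1 \in T_vertices a b c) || (gam g 1 \in H_vertices a b c)) :
  gsign g = \prod_(1 <= i < k.+1) arc_sign a b c (gam g i) (gam g i.+1).
Proof.
have gam_TH i : (0 < i)%N -> gam g i \in TH_vertices a b c.
  elim: i => [//|[|i] IHi _]; first by rewrite mem_cat.
  exact: (spoke_triple_vsign hk hg habc (IHi isT)).1.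
rewrite (gsign_spokes hk) -(big_nat_period _ 2 (spoke_vsign_period g)) big_nat_blocks.
rewrite big_add1 /=; apply: eq_big_nat => i /andP[i_gt0 _].
rewrite !big_ord_recr big_ord0 /= mul1r mul0n add0n mul1n.
exact: (spoke_triple_vsign hk hg habc (gam_TH i i_gt0)).2.
Qed.
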